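(* Let $\mathbf{S}$ be a distributive meet semilattice and $n\ge1$ an integer. Then the lattice $\mathrm{Fi}_n\mathbf{S}$ of all $n$-filters on $\mathbf{S}$, ordered by inclusion, is a distributive lattice.
   Context: A meet semilattice is distributive if whenever $x\wedge y\le z$ there are $x'\ge x$ and $y'\ge y$ with $x'\wedge y'=z$. For a set $X$, $Y\subseteq_n X$ means $Y$ is a non-empty subset of $X$ with $|Y|\le n$. An $n$-filter on $\mathbf{S}$ is an upset $F$ such that for every non-empty finite $X\subseteq F$: if $\bigwedge Y\in F$ for every $Y\subseteq_n X$ then $\bigwedge X\in F$. In $\mathrm{Fi}_n\mathbf{S}$ meets are intersections and the join of two $n$-filters is the $n$-filter generated by their union. *)

From HB Require Import structures.
From mathcomp Require Import all_boot all_order.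
Set Implicit Arguments. Unset Strict Implicit. Unset Printing Implicit Defensive.
Import Order.TTheory.
Local Open Scope order_scope.

(* Meet of a non-empty finite list x0 :: s (no top element is assumed). *)
Definition meet_ne {d} {S : meetSemilatticeType d} (x0 : S) (s : seq S) : S :=
  foldr Order.meet x0 s.

Definition distributive_msl {d} (S : meetSemilatticeType d) : Prop :=
  forall x y z : S, x `&` y <= z ->
    exists x' y' : S, x <= x' /\ y <= y' /\ x' `&` y' = z.

Definition upset {d} {S : meetSemilatticeType d} (F : S -> Prop) : Prop :=
  forall x y : S, x <= y -> F x -> F y.

(* Finite subsets are represented by lists; "Y ⊆_n X" : Y non-empty,
   every element of Y in X, and |Y| <= n. *)
Definition nfilter {d} {S : meetSemilatticeType d} (n : nat) (F : S -> Prop) : Prop :=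
  upset F /\
  forall (x0 : S) (s : seq S),
    (forall x, x \in x0 :: s -> F x) ->
    (forall (y0 : S) (t : seq S),
        (forall y, y \in y0 :: t -> y \in x0 :: s) ->
        (size (y0 :: t) <= n)%N ->
        F (meet_ne y0 t)) ->
    F (meet_ne x0 s).

Definition nfilter_gen {d} {S : meetSemilatticeType d} (n : nat) (A : S -> Prop) : S -> Prop :=
  fun x => forall F : S -> Prop, nfilter n F -> (forall y, A y -> F y) -> F x.

Definition nfilter_join {d} {S : meetSemilatticeType d} (n : nat) (G H : S -> Prop) : S -> Prop :=
  nfilter_gen n (fun x => G x \/ H x).

Definition nfilter_meet {d} {S : meetSemilatticeType d} (G H : S -> Prop) : S -> Prop :=
  fun x => G x /\ H x.

From mathcomp Require Import all_boot all_order.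
Import Order.TTheory.

(* Given F and an n-filter K, call y K-joinable with F when every common upper
   bound of y and an element of F lies in K; finite distributivity makes the
   K-joinable elements an n-filter.  If K is the join of F /\ G and F /\ H, it
   contains G and H, hence the join of G and H, and an element x of F that is
   K-joinable with F lies in K, as x is a common bound of itself and x.  The
   reverse inclusion is minimality of generated n-filters. *)

Local Open Scope order_scope.

Section MeetNe.
Context {d : Order.disp_t} {S : meetSemilatticeType d}.
Implicit Types (x y z : S) (s t : seq S).

Lemma meet_ne_le_mem x0 s x : x \in x0 :: s -> meet_ne x0 s <= x.
Proof.
elim: s x => [|a s IH] x; first by rewrite inE => /eqP ->.
rewrite /meet_ne /= !inE => /or3P [/eqP ->|/eqP ->|xs].
- exact: le_trans (leIr _ _) (IH _ (mem_head _ _)).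
- exact: leIl.
- by apply: le_trans (leIr _ _) (IH _ _); rewrite inE xs orbT.
Qed.

Lemma le_meet_ne z x0 s : (forall x, x \in x0 :: s -> z <= x) -> z <= meet_ne x0 s.
Proof.
elim: s => [|a s IH] zs; first exact/zs/mem_head.
rewrite /meet_ne /= lexI zs ?inE ?eqxx ?orbT //=.
by apply: IH => x; rewrite inE => /orP [/eqP ->|xs]; apply: zs; rewrite !inE ?eqxx ?xs ?orbT.
Qed.

Lemma distr_meet_ne_decomp x0 s z : distributive_msl S -> meet_ne x0 s <= z ->
  exists w0 t, meet_ne w0 t = z /\
    forall w, w \in w0 :: t -> exists2 x, x \in x0 :: s & x <= w.
Proof.
move=> D; elim: s z => [|a s IH] z le_sz.
  by exists z, [::]; split=> // w; rewrite inE => /eqP ->; exists x0; rewrite ?inE.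
have [a' [r' [le_aa' [le_sr' <-]]]] := D _ _ _ le_sz.
have [w0 [t [<- wt]]] := IH _ le_sr'.
have sub_s : {subset x0 :: s <= x0 :: a :: s}.
  by move=> y; rewrite !inE => /orP [] ->; rewrite ?orbT.
exists w0, (a' :: t); split=> // w; rewrite !inE => /or3P [/eqP ->|/eqP ->|wt'].
- by have [x /sub_s xs le_xw] := wt w0 (mem_head _ _); exists x.
- by exists a; rewrite // !inE eqxx orbT.
- have [|x /sub_s xs le_xw] := wt w; last by exists x.
  by rewrite inE wt' orbT.
Qed.

Lemma meet_ne_dominated (X : seq S) y0 t :
  (forall y, y \in y0 :: t -> exists2 x, x \in X & x <= y) ->
  exists z0 u, size u = size t /\ (forall z, z \in z0 :: u -> z \in X) /\
    meet_ne z0 u <= meet_ne y0 t.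
Proof.
elim: t => [|a t IH] dom.
  have [x xX le_xy] := dom y0 (mem_head _ _).
  by exists x, [::]; split; [|split=> // z; rewrite inE => /eqP ->].
have [z0 [u [size_u [uX le_u]]]] : exists z0 u, size u = size t /\
    (forall z, z \in z0 :: u -> z \in X) /\ meet_ne z0 u <= meet_ne y0 t.
  by apply: IH => y; rewrite inE => /orP [/eqP ->|yt]; apply: dom;
    rewrite !inE ?eqxx ?yt ?orbT.
have [|x xX le_xa] := dom a; first by rewrite !inE eqxx orbT.
exists z0, (x :: u); split; first by rewrite /= size_u.
split; last exact: leI2.
by move=> z; rewrite !inE => /or3P [/eqP ->|/eqP ->|zu] //; apply: uX;
  rewrite inE ?eqxx ?zu ?orbT.
Qed.

End MeetNe.

Section NFilters.
Context {d : Order.disp_t} {S : meetSemilatticeType d} (n : nat).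
Implicit Types (A F G H K : S -> Prop) (x y : S).

Lemma nfilter_gen_nfilter A : nfilter n (nfilter_gen n A).
Proof.
split=> [x y le_xy Ax F nF AF|x0 s sA sub F nF AF].
  exact: nF.1 _ _ le_xy (Ax F nF AF).
by apply: nF.2 => [x /sA|y0 t ts /(sub _ _ ts)]; apply.
Qed.

Lemma nfilter_join_l G H x : G x -> nfilter_join n G H x.
Proof. by move=> Gx F _; apply; left. Qed.

Lemma nfilter_join_r G H x : H x -> nfilter_join n G H x.
Proof. by move=> Hx F _; apply; right. Qed.

Lemma nfilter_join_least G H K : nfilter n K ->
  (forall x, G x -> K x) -> (forall x, H x -> K x) ->
  forall x, nfilter_join n G H x -> K x.
Proof. by move=> nK GK HK x; apply=> // y [/GK|/HK]. Qed.

Definition joinable_with F K (y : S) : Prop :=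
  forall f z, F f -> y <= z -> f <= z -> K z.

Lemma joinable_with_nfilter F K :
  distributive_msl S -> nfilter n K -> nfilter n (joinable_with F K).
Proof.
move=> D nK; split=> [a b le_ab Ja f z Ff le_bz le_fz|x0 s sJ sub f z Ff le_sz le_fz].
  exact: Ja f z Ff (le_trans le_ab le_bz) le_fz.
(* Write the bound as a meet of elements w, each above some x_i: every w is in
   K, and each n-element meet of the w is above an n-element meet of the x_i. *)
have [w0 [t [eq_z wt]]] := distr_meet_ne_decomp _ _ _ D le_sz; subst z.
have le_fw w : w \in w0 :: t -> f <= w by move=> /meet_ne_le_mem; apply: le_trans le_fz.
apply: nK.2 => [w wt'|y0 u ut size_u].
  by have [y ys le_yw] := wt w wt'; exact: sJ y ys f w Ff le_yw (le_fw w wt').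
have [z0 [v [size_v [vs le_vu]]]] := meet_ne_dominated _ _ _ (fun y yu => wt y (ut y yu)).
apply: (sub z0 v vs _ f) => //; first by rewrite /= size_v.
by apply: le_meet_ne => y /ut /le_fw.
Qed.

Lemma joinable_with_meet F G K :
  upset F -> upset G -> (forall y, F y /\ G y -> K y) ->
  forall y, G y -> joinable_with F K y.
Proof.
move=> uF uG FGK y Gy f z Ff le_yz le_fz.
by apply: FGK; split; [apply: uF Ff | apply: uG Gy].
Qed.

End NFilters.

Theorem mainTheorem3 (d : Order.disp_t) (S : meetSemilatticeType d) (n : nat) :
  distributive_msl S -> (0 < n)%N ->
  forall F G H : S -> Prop,
    nfilter n F -> nfilter n G -> nfilter n H ->
    forall x : S,
      nfilter_meet F (nfilter_join n G H) x <->
      nfilter_join n (nfilter_meet F G) (nfilter_meet F H) x.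
Proof.
move=> D _ F G H nF nG nH x.
set K := nfilter_join n (nfilter_meet F G) (nfilter_meet F H).
have nK : nfilter n K by apply: nfilter_gen_nfilter.
split=> [[Fx GHx]|Kx].
- suff /(_ x x Fx) : joinable_with F K x by apply.
  apply: nfilter_join_least GHx; first exact: joinable_with_nfilter.
    by apply: joinable_with_meet nF.1 nG.1 _ => y FGy; apply: nfilter_join_l.
  by apply: joinable_with_meet nF.1 nH.1 _ => y FHy; apply: nfilter_join_r.
- split; first by apply: nfilter_join_least Kx => // y [].
  apply: nfilter_join_least Kx; first exact: nfilter_gen_nfilter.
    by move=> y [_ /nfilter_join_l].
  by move=> y [_ /nfilter_join_r].
Qed.
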